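(* Let $G$ be an abstract snake graph with $d\ge1$ tiles. Then $$\sum_P x(P)h(P)=x_{i_1}\cdots x_{i_d}\;\mathrm{UR}\!\left(\begin{pmatrix}\frac{x_w}{x_{i_d}}&x_z\mathsf y_{i_d}\\ -\frac{1}{x_z}&0\end{pmatrix}M_d\begin{pmatrix}0&x_a\\-\frac{1}{x_a}&\frac{x_b}{x_{i_1}}\end{pmatrix}\right),$$ where the sum is over all perfect matchings $P$ of $G$ and $\mathrm{UR}$ denotes the upper-right entry.
   Context: Abstract snake graph with $d\ge 1$ tiles: unit squares $G_1,\dots,G_d$ in the plane with $G_1=[0,1]^2$ and, for $1\le j\le d-1$, $G_{j+1}$ equal to the translate of $G_j$ either by $(0,1)$ (''$G_{j+1}$ north of $G_j$'') or by $(1,0)$ (''$G_{j+1}$ east of $G_j$''). The graph $G$ has as vertices the corners and as edges the sides of these squares (a shared side is one edge). Edges carry labels from some label set (labels need not be distinct): the south edge of $G_1$ is labeled $a$ and the west edge of $G_1$ is labeled $b$; for $1\le j\le d-1$, the edge shared by $G_j$ and $G_{j+1}$ is labeled $a_j$, and if $G_{j+1}$ is north of $G_j$ then the east edge of $G_j$ is labeled $i_{j+1}$ and the west edge of $G_{j+1}$ is labeled $i_j$, while if $G_{j+1}$ is east of $G_j$ then the north edge of $G_j$ is labeled $i_{j+1}$ and the south edge of $G_{j+1}$ is labeled $i_j$; finally, if $d$ is odd the north edge of $G_d$ is labeled $w$ and its east edge $z$, and if $d$ is even the east edge of $G_d$ is labeled $w$ and its north edge $z$. The tile $G_j$ itself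 carries the label $i_j$. To each label $\ell$ attach commuting indeterminates $x_\ell$ and (for the tile labels) $\mathsf y_\ell$. For a perfect matching $P$ of $G$, its weight is $x(P)=\prod_{e\in P}x_{\mathrm{label}(e)}$. Let $P_-$ (the minimal matching) be the unique perfect matching of $G$ consisting only of edges on the boundary of $G_1\cup\dots\cup G_d$ and containing the south edge of $G_1$. For every perfect matching $P$, the symmetric difference $P\ominus P_-$ is the set of boundary edges of a union of cycles enclosing a set of tiles $\{G_j: j\in J(P)\}$; the height monomial is $h(P)=\prod_{j\in J(P)}\mathsf y_{i_j}$. Matrix of $G$: for $1\le j\le d-1$, let $m_j=\begin{pmatrix}1&0\\ \frac{x_{a_j}}{x_{i_j}x_{i_{j+1}}}&\mathsf y_{i_j}\end{pmatrix}$ if either ($j$ is odd and $G_{j+1}$ is north of $G_j$) or ($j$ is even and $G_{j+1}$ is east of $G_j$), and $m_j=\begin{pmatrix}\frac{x_{i_{j+1}}}{x_{i_j}}&x_{a_j}\mathsf y_{i_j}\\0&\frac{x_{i_j}\mathsf y_{i_j}}{x_{i_{j+1}}}\end{pmatrix}$ otherwise. Set $M_d=m_{d-1}\cdots m_1$ for $d\ge2$ and $M_1$ the $2\times 2$ identity matrix. *)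

From HB Require Import structures.
From mathcomp Require Import all_boot all_order all_algebra.
Set Implicit Arguments. Unset Strict Implicit. Unset Printing Implicit Defensive.
Import Order.TTheory GRing.Theory Num.Theory.

(* Tiles are 0-indexed: tile k (k < d) is G_{k+1} of the paper.
   dirs`_k = true  means G_{k+2} is north of G_{k+1};
   dirs`_k = false means G_{k+2} is east of G_{k+1}.
   li k = label i_{k+1}  (k < d),   lA k = label a_{k+1}  (k < d-1). *)
Record snake (L : Type) := Snake {
  dirs : seq bool;
  la : L; lb : L; lw : L; lz : L;
  li : nat -> L;
  lA : nat -> L }.

Section SnakeGraph.
Variables (L : Type) (G : snake L).

Definition ntiles : nat := (size (dirs G)).+1.

(* lower-left corner of tile k *)
Definition corner (k : nat) : nat * nat :=
  (count negb (take k (dirs G)), count id (take k (dirs G))).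

(* an edge (x, y, true) is the horizontal segment (x,y)-(x+1,y);
   an edge (x, y, false) is the vertical segment (x,y)-(x,y+1). *)
Definition edge := (nat * nat * bool)%type.
Definition south (c : nat * nat) : edge := (c.1, c.2, true).
Definition north (c : nat * nat) : edge := (c.1, c.2.+1, true).
Definition west  (c : nat * nat) : edge := (c.1, c.2, false).
Definition east  (c : nat * nat) : edge := (c.1.+1, c.2, false).

Definition tile_sides (k : nat) : seq edge :=
  [:: south (corner k); west (corner k); north (corner k); east (corner k)].

(* labelled edges created by the passage from tile k to tile k+1 *)
Definition transition (k : nat) : seq (edge * L) :=
  let c := corner k in let c' := corner k.+1 in
  if nth false (dirs G) k then
    [:: (north c, lA G k); (east c, li G k.+1); (west c', li G k)]
  else
    [:: (east c, lA G k); (north c, li G k.+1); (south c', li G k)].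

Definition final_edges : seq (edge * L) :=
  let c := corner (size (dirs G)) in
  if odd ntiles then [:: (north c, lw G); (east c, lz G)]
  else [:: (east c, lw G); (north c, lz G)].

(* the list of all edges of G, each with its label (each edge occurs once) *)
Definition ledges : seq (edge * L) :=
  [:: (south (corner 0), la G); (west (corner 0), lb G)]
  ++ flatten (map transition (iota 0 (size (dirs G)))) ++ final_edges.

Definition nE : nat := size ledges.

Definition edge_of (e : 'I_nE) : edge := (nth (south (0, 0), la G) ledges e).1.
Definition label_of (e : 'I_nE) : L := (nth (south (0, 0), la G) ledges e).2.

Definition endpoints (e : edge) : seq (nat * nat) :=
  let: (x, y, h) := e in [:: (x, y); if h then (x.+1, y) else (x, y.+1)].

Definition is_perfect (S : {set 'I_nE}) : bool :=
  [forall e : 'I_nE,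
     all (fun v => #|[set f in S | v \in endpoints (edge_of f)]| == 1)
         (endpoints (edge_of e))].

Definition is_boundary (e : edge) : bool :=
  count (fun k => e \in tile_sides k) (iota 0 ntiles) == 1.

Definition is_minimal_matching (S : {set 'I_nE}) : bool :=
  [&& is_perfect S,
      [forall e in S, is_boundary (edge_of e)] &
      [exists e in S, edge_of e == south (corner 0)]].

(* tile k is enclosed by the union of cycles formed by the edge set D
   (even-odd rule: the horizontal ray going west from the centre of tile k
   crosses an odd number of edges of D) *)
Definition encloses (D : {set 'I_nE}) (k : nat) : bool :=
  odd #|[set e in D | let: (x, y, h) := edge_of e in
                      [&& ~~ h, x <= (corner k).1 & y == (corner k).2]]|.

Definition symdiff (S T : {set 'I_nE}) : {set 'I_nE} := (S :\: T) :|: (T :\: S).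

Local Open Scope ring_scope.
Variables (F : fieldType) (xv yv : L -> F).

Definition weight (S : {set 'I_nE}) : F := \prod_(e in S) xv (label_of e).

Definition height (Pm S : {set 'I_nE}) : F :=
  \prod_(k < ntiles | encloses (symdiff S Pm) k) yv (li G k).

Definition mx2 (p q r s : F) : 'M[F]_2 :=
  \matrix_(i < 2, j < 2)
     if (i == 0 :> nat) then (if (j == 0 :> nat) then p else q)
     else (if (j == 0 :> nat) then r else s).

(* m_{k+1} of the paper *)
Definition mj (k : nat) : 'M[F]_2 :=
  let xj := xv (li G k) in let xj1 := xv (li G k.+1) in let yj := yv (li G k) in
  if nth false (dirs G) k == ~~ odd k then
    mx2 1 0 (xv (lA G k) / (xj * xj1)) yj
  else
    mx2 (xj1 / xj) (xv (lA G k) * yj) 0 (xj * yj / xj1).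

(* M_d = m_{d-1} ... m_1 *)
Definition Mmat : 'M[F]_2 :=
  foldl (fun acc k => mj k *m acc) 1%:M (iota 0 (size (dirs G))).

Definition left_mx : 'M[F]_2 :=
  let xd := xv (li G (size (dirs G))) in
  mx2 (xv (lw G) / xd) (xv (lz G) * yv (li G (size (dirs G)))) (- (xv (lz G))^-1) 0.

Definition right_mx : 'M[F]_2 :=
  mx2 0 (xv (la G)) (- (xv (la G))^-1) (xv (lb G) / xv (li G 0)).

Definition UR (A : 'M[F]_2) : F := A ord0 ord_max.

End SnakeGraph.

(* Every vertex of G lies on an anti-diagonal x + y = l.  Level
     0 is the origin, level n+2 (n = d - 1) is the north-east corner of G_d,
     and every level k+1 <= n+1 carries exactly two vertices, the north-west
     and the south-east corner of tile k (tiles are numbered from 0).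
     Every edge joins two consecutive levels.
   - States.  Since the levels 0..k carry 2k+1 vertices, a perfect matching
     uses exactly one edge between levels k and k+1; the bit s k records
     whether it ends at the north-west vertex of level k+1.  Perfect
     matchings are in bijection with the "admissible" bit sequences s_0..s_n
     (one local condition per pair of consecutive tiles), the minimal
     matching P_- has s k = odd k, and tile k is enclosed by P (-) P_- iff
     s k differs from odd k.
   - Weights.  Hence weight * height of a matching is a product of local
     factors, which (after multiplying by x_{i_1}...x_{i_d}, telescoped over
     the tiles) are entries of the left matrix, of the m_k and of the right
     matrix.  The transfer-matrix expansion of the upper-right entry of their
     product is a sum over all bit sequences, in which the non-admissible
     ones contribute 0.  The theorem follows by reindexing the sum over
     perfect matchings by admissible states. *)

From HB Require Import structures.
From mathcomp Require Import all_boot all_order all_algebra.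
From mathcomp Require Import zify ring.
Set Implicit Arguments. Unset Strict Implicit. Unset Printing Implicit Defensive.
Import GRing.Theory.

Section EdgeList.
Variables (L : Type) (G : snake L).
Local Notation n := (size (dirs G)).
Local Notation dr k := (nth false (dirs G) k).
Local Notation c k := (corner G k).

Lemma corner0 : c 0 = (0, 0).
Proof. by rewrite /corner take0. Qed.

Lemma cornerS k : k < n ->
  c k.+1 = if dr k then ((c k).1, (c k).2.+1) else ((c k).1.+1, (c k).2).
Proof.
move=> lt_k; rewrite /corner (take_nth false lt_k) -!cats1 !count_cat /=.
by case: (dr k); rewrite /= ?addn0 ?addn1.
Qed.

Lemma corner_sum k : k <= n -> (c k).1 + (c k).2 = k.
Proof.
move=> le_k; rewrite /corner /= addnC.
have := count_predC id (take k (dirs G)).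
by rewrite size_take_min (minn_idPl le_k).
Qed.

Lemma corner_mono m k : m <= k -> k <= n ->
  (c m).1 <= (c k).1 /\ (c m).2 <= (c k).2.
Proof.
move=> le_mk le_k; rewrite /corner /=.
have -> : take k (dirs G) = take m (dirs G) ++ take (k - m) (drop m (dirs G)).
  by rewrite -{1}(subnKC le_mk) takeD.
by rewrite !count_cat !leq_addr.
Qed.

Lemma size_transition k : size (transition G k) = 3.
Proof. by rewrite /transition; case: ifP. Qed.

Lemma size_final_edges : size (final_edges G) = 2.
Proof. by rewrite /final_edges; case: ifP. Qed.

Lemma size_transitions m0 m :
  size (flatten (map (transition G) (iota m0 m))) = 3 * m.
Proof.
elim: m m0 => [|m IHm] m0 //=.
by rewrite size_cat size_transition IHm mulnS.
Qed.

(* The edge list is a, b, then three edges per transition, then w, z. *)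
Lemma nE_eq : nE G = 3 * n + 4.
Proof.
by rewrite /nE /ledges !size_cat size_transitions size_final_edges /=; lia.
Qed.

Lemma nth_transitions x0 m0 m k r : k < m -> r < 3 ->
  nth x0 (flatten (map (transition G) (iota m0 m))) (3 * k + r) =
  nth x0 (transition G (m0 + k)) r.
Proof.
elim: m m0 k => [|m IHm] m0 k //= lt_km lt_r3.
rewrite nth_cat size_transition.
case: k lt_km => [|k] lt_km; first by rewrite muln0 add0n lt_r3 addn0.
have -> : (3 * k.+1 + r < 3) = false by lia.
have -> : 3 * k.+1 + r - 3 = 3 * k + r by lia.
by rewrite IHm // addSnnS.
Qed.

Definition ledge0 : edge * L := (south (0, 0), la G).

(* Edge 2 + (3k + r) is the r-th edge created by the transition from tile k
   to tile k+1: r = 0 the shared side (label lA k), r = 1 the free side of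
   tile k (label li k.+1), r = 2 the free side of tile k+1 (label li k). *)
Lemma nth_ledges_transition k r : k < n -> r < 3 ->
  nth ledge0 (ledges G) (2 + (3 * k + r)) = nth ledge0 (transition G k) r.
Proof.
move=> lt_k lt_r3; rewrite /ledges nth_cat /= addKn nth_cat size_transitions.
by rewrite (_ : 3 * k + r < 3 * n) ?nth_transitions //; lia.
Qed.

Lemma nth_ledges_final r : r < 2 ->
  nth ledge0 (ledges G) (2 + (3 * n + r)) = nth ledge0 (final_edges G) r.
Proof.
move=> lt_r2; rewrite /ledges nth_cat /= addKn.
by rewrite nth_cat size_transitions ltnNge leq_addr /= addKn.
Qed.

Lemma edge_index_cases j : j < nE G ->
  [\/ j = 0, j = 1,
      exists2 k, k < n & exists2 r, r < 3 & j = 2 + (3 * k + r)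
    | exists2 r, r < 2 & j = 2 + (3 * n + r)].
Proof.
rewrite nE_eq => lt_j.
case: (j =P 0) => [->|j_neq0]; first by constructor 1.
case: (j =P 1) => [->|j_neq1]; first by constructor 2.
case: (ltnP ((j - 2) %/ 3) n) => lt_q.
  constructor 3; exists ((j - 2) %/ 3) => //; exists ((j - 2) %% 3); lia.
constructor 4; exists ((j - 2) %% 3); lia.
Qed.

End EdgeList.

Arguments corner : simpl never.

(* Vertices, identified by their level and, on levels 1..n+1, by a bit:
   (k+1, true) is the north-west and (k+1, false) the south-east corner of
   tile k; (0, false) is the origin and (n+2, false) the last corner. *)
Section Vertices.
Variables (L : Type) (G : snake L).
Local Notation n := (size (dirs G)).
Local Notation dr k := (nth false (dirs G) k).
Local Notation c k := (corner G k).

Definition vpos (v : nat * bool) : nat * nat :=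
  if v.1 == 0 then (0, 0)
  else if v.1 == n.+2 then ((c n).1.+1, (c n).2.+1)
  else if v.2 then ((c v.1.-1).1, (c v.1.-1).2.+1)
  else ((c v.1.-1).1.+1, (c v.1.-1).2).

Definition is_vertex (v : nat * bool) : bool :=
  [|| (v.1 == 0) && ~~ v.2, 0 < v.1 <= n.+1 | (v.1 == n.+2) && ~~ v.2].

Lemma vpos_level v : is_vertex v -> (vpos v).1 + (vpos v).2 = v.1.
Proof.
case: v => l b; rewrite /is_vertex /vpos /=.
case: (l =P 0) => [->|l_neq0] //=.
case: (l =P n.+2) => [->|l_neq2] /=; first by rewrite addSn addnS corner_sum.
case/orP => [/andP[l_gt0 l_le]|//].
have := corner_sum (_ : l.-1 <= n); case: b => /=; lia.
Qed.

Lemma vpos_inj v w : is_vertex v -> is_vertex w -> vpos v = vpos w -> v = w.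
Proof.
move=> Vv Vw E.
have El : v.1 = w.1 by rewrite -(vpos_level Vv) -(vpos_level Vw) E.
move: Vv Vw E; case: v El => l b; case: w => l' b' /= <-.
rewrite /is_vertex /vpos /=.
case: (l =P 0) => [->|l_neq0] /=; first by case: b; case: b'.
case: (l =P n.+2) => [->|l_neq2] /=; first by rewrite ltnn; case: b; case: b'.
by case: b; case: b' => //= _ _ [] /eqP; rewrite ?eqSS; lia.
Qed.

Lemma mem_map_vpos v vs : is_vertex v -> all is_vertex vs ->
  (vpos v \in map vpos vs) = (v \in vs).
Proof.
move=> Vv Vvs; apply/mapP/idP => [[w vs_w /vpos_inj Evw]|vs_v]; last by exists v.
by rewrite Evw //; apply: (allP Vvs).
Qed.

Definition transition_ends (k r : nat) : seq (nat * bool) :=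
  if k < n then
    if dr k then
      match r with 0 => [:: (k.+1, true); (k.+2, false)]
                 | 1 => [:: (k.+1, false); (k.+2, false)]
                 | _ => [:: (k.+1, true); (k.+2, true)] end
    else
      match r with 0 => [:: (k.+1, false); (k.+2, true)]
                 | 1 => [:: (k.+1, true); (k.+2, true)]
                 | _ => [:: (k.+1, false); (k.+2, false)] end
  else [:: (n.+1, (r == 0) == ~~ odd n); (n.+2, false)].

Definition ends (j : nat) : seq (nat * bool) :=
  if j == 0 then [:: (0, false); (1, false)]
  else if j == 1 then [:: (0, false); (1, true)]
  else transition_ends ((j - 2) %/ 3) ((j - 2) %% 3).

Lemma ends_transition k r : r < 3 -> ends (2 + (3 * k + r)) = transition_ends k r.
Proof.
move=> lt_r3; rewrite /ends addKn.
have -> : (2 + (3 * k + r) == 0) = false by lia.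
have -> : (2 + (3 * k + r) == 1) = false by lia.
by congr transition_ends; lia.
Qed.

Lemma endpoints_ends (j : 'I_(nE G)) : endpoints (edge_of j) = map vpos (ends j).
Proof.
rewrite /edge_of -/(ledge0 G).
case: (edge_index_cases (ltn_ord j)) => [->|->|[k lt_k [r lt_r ->]]|[r lt_r ->]].
- by rewrite /ends /= /vpos /= /corner take0.
- by rewrite /ends /= /vpos /= /corner take0.
- rewrite nth_ledges_transition // ends_transition // /transition_ends lt_k.
  have lk1 : (k.+1 == n.+2) = false by lia.
  have lk2 : (k.+2 == n.+2) = false by lia.
  have cS := cornerS lt_k; rewrite /transition cS.
  case: (dr k) cS => cS; case: r lt_r => [|[|[|r]]] //= _;
  by rewrite /vpos /= lk1 lk2; move: cS; rewrite /corner => -[-> ->].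
- rewrite nth_ledges_final // ends_transition ?(ltn_trans lt_r) //.
  rewrite /transition_ends ltnn /final_edges /ntiles /=.
  have ln1 : (n.+1 == n.+2) = false by lia.
  by case: r lt_r => [|[|r]] // _; case: (odd n); rewrite /vpos /= ln1 eqxx.
Qed.

Lemma ends_vertex j : j < nE G -> all is_vertex (ends j).
Proof.
move=> lt_j; case: (edge_index_cases lt_j) => [->|->|[k lt_k [r lt_r ->]]|[r lt_r ->]] //.
- rewrite ends_transition // /transition_ends lt_k.
  by case: (dr k); case: r lt_r => [|[|[|r]]] //= _; rewrite /is_vertex /=; lia.
- rewrite ends_transition ?(ltn_trans lt_r) // /transition_ends ltnn.
  by rewrite /= /is_vertex /= eqxx /= andbT; lia.
Qed.

Lemma vertex_covered v : is_vertex v -> exists2 j, j < nE G & v \in ends j.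
Proof.
case: v => l b; rewrite /is_vertex /=.
case/or3P => [/andP[/eqP -> /negPf ->]|/andP[l_gt0 l_le]|/andP[/eqP -> /negPf ->]].
- by exists 0; rewrite ?nE_eq ?inE //; lia.
- case: (ltnP l.-1 n) => lt_l.
    exists (2 + (3 * l.-1 + (if dr l.-1 == b then 0 else 1))).
      by rewrite nE_eq; case: ifP; lia.
    rewrite ends_transition; last by case: ifP.
    rewrite /transition_ends lt_l (_ : l = l.-1.+1); last by lia.
    by case: (dr l.-1); case: b; rewrite /= !inE ?eqxx ?orbT.
  exists (2 + (3 * n + (if b == ~~ odd n then 0 else 1))).
    by rewrite nE_eq; case: ifP; lia.
  rewrite ends_transition; last by case: ifP.
  rewrite /transition_ends ltnn (_ : l = n.+1); last by lia.
  by case: (odd n); case: b; rewrite /= !inE ?eqxx ?orbT.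
- exists (2 + (3 * n + 0)); first by rewrite nE_eq; lia.
  by rewrite ends_transition // /transition_ends ltnn in_cons mem_seq1; apply/orP; right.
Qed.

End Vertices.

Lemma count_iota_list (p P : pred nat) (l : seq nat) N :
  uniq l -> all (fun j => j < N) l -> (forall j, j < N -> P j = (j \in l)) ->
  count (fun j => p j && P j) (iota 0 N) = count p l.
Proof.
move=> uniq_l lt_l Pl; rewrite -(count_filter p P) /=.
move: p; apply/permP; apply: uniq_perm => //; first by rewrite filter_uniq ?iota_uniq.
move=> j; rewrite mem_filter mem_iota /= add0n.
case: (ltnP j N) => [lt_j|le_j]; first by rewrite andbT Pl.
by rewrite andbF; apply/esym/negP => /(allP lt_l); rewrite ltnNge le_j.
Qed.

Lemma card_ord_count N (p : pred nat) :
  #|[pred f : 'I_N | p f]| = count p (iota 0 N).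
Proof.
rewrite -sum1_card -sum1_count -(big_mkord p (fun _ => 1%N)) /index_iota subn0.
by apply: eq_bigl.
Qed.

Section Degrees.
Variables (L : Type) (G : snake L).
Local Notation n := (size (dirs G)).
Local Notation dr k := (nth false (dirs G) k).

Definition inS (S : {set 'I_(nE G)}) (j : nat) : bool :=
  [exists f : 'I_(nE G), (f \in S) && (val f == j)].

Lemma inS_ord (S : {set 'I_(nE G)}) (f : 'I_(nE G)) : inS S f = (f \in S).
Proof.
apply/existsP/idP => [[g /andP[Sg /eqP/val_inj <-]]|Sf] //.
by exists f; rewrite Sf eqxx.
Qed.

Definition degree (S : {set 'I_(nE G)}) (v : nat * bool) : nat :=
  count (fun j => inS S j && (v \in ends G j)) (iota 0 (nE G)).

Lemma card_degree (S : {set 'I_(nE G)}) v : is_vertex G v ->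
  #|[set f in S | vpos G v \in endpoints (edge_of f)]| = degree S v.
Proof.
move=> Vv; rewrite /degree -card_ord_count; apply: eq_card => f.
by rewrite !inE endpoints_ends (mem_map_vpos Vv) ?ends_vertex ?inS_ord.
Qed.

Lemma perfectP (S : {set 'I_(nE G)}) :
  is_perfect S <-> (forall v, is_vertex G v -> degree S v = 1).
Proof.
split=> [/forallP perfS v Vv|deg1].
  have [j lt_j ends_v] := vertex_covered Vv.
  have /allP/(_ (vpos G v)) := perfS (Ordinal lt_j).
  rewrite endpoints_ends (mem_map_vpos Vv) ?ends_vertex // ends_v => /(_ isT) /eqP.
  by rewrite card_degree.
apply/forallP => f; apply/allP => w; rewrite endpoints_ends => /mapP [v ends_v ->].
have Vv : is_vertex G v := allP (ends_vertex (ltn_ord f)) v ends_v.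
by rewrite card_degree // deg1.
Qed.

(* Indices of the edges joining vertex (k+1, b) to the level below, resp.
   to the level above. *)
Definition edges_below (k : nat) (b : bool) : seq nat :=
  if k is m.+1 then
    (if dr m then (if b then [:: 4 + 3 * m] else [:: 2 + 3 * m; 3 + 3 * m])
     else (if b then [:: 2 + 3 * m; 3 + 3 * m] else [:: 4 + 3 * m]))
  else [:: if b then 1 else 0].

Definition edges_above (k : nat) (b : bool) : seq nat :=
  if k < n then
    (if dr k then (if b then [:: 2 + 3 * k; 4 + 3 * k] else [:: 3 + 3 * k])
     else (if b then [:: 3 + 3 * k] else [:: 2 + 3 * k; 4 + 3 * k]))
  else [:: if b == ~~ odd n then 2 + 3 * n else 3 + 3 * n].

Definition incident (k : nat) (b : bool) : seq nat :=
  edges_below k b ++ edges_above k b.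

Lemma mem_ends_level k b j : k <= n -> j < nE G ->
  ((k.+1, b) \in ends G j) = (j \in incident k b).
Proof.
move=> le_k lt_j; rewrite /incident /edges_below /edges_above.
case: (edge_index_cases lt_j) => [->|->|[m lt_m [r lt_r ->]]|[r lt_r ->]].
- by case: k le_k => [|k] le_k; case: b; repeat (case: ifP => ?);
    rewrite ?mem_cat !inE ?xpair_eqE /=; lia.
- by case: k le_k => [|k] le_k; case: b; repeat (case: ifP => ?);
    rewrite ?mem_cat !inE ?xpair_eqE /=; lia.
- rewrite ends_transition // /transition_ends lt_m.
  have [->|neq_km] := eqVneq k m.
    rewrite lt_m; case: m le_k lt_m => [|m] le_m lt_m; case: b;
    case: r lt_r => [|[|[|r]]] lt_r //; repeat (case: ifP => ?);
    rewrite ?mem_cat !inE ?xpair_eqE /=; lia.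
  have [->|neq_km1] := eqVneq k m.+1.
    case: b; case: r lt_r => [|[|[|r]]] lt_r //; repeat (case: ifP => ?);
    rewrite ?mem_cat !inE ?xpair_eqE /=; lia.
  case: k le_k neq_km neq_km1 => [|k] le_k neq_km neq_km1; case: b;
  case: r lt_r => [|[|[|r]]] lt_r //; repeat (case: ifP => ?);
  rewrite ?mem_cat !inE ?xpair_eqE /=; lia.
- rewrite ends_transition ?(ltn_trans lt_r) // /transition_ends ltnn.
  case: k le_k => [|k] le_k; case: b; case: r lt_r => [|[|r]] lt_r //;
  repeat (case: ifP => ?); rewrite ?mem_cat !inE ?xpair_eqE /=; lia.
Qed.

Lemma incident_lt k b : k <= n -> all (fun j => j < nE G) (incident k b).
Proof.
move=> le_k; rewrite nE_eq /incident /edges_below /edges_above.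
by case: k le_k => [|k] le_k; case: b; repeat (case: ifP => ?); rewrite /=; lia.
Qed.

Lemma degree_level (S : {set 'I_(nE G)}) k b : k <= n ->
  degree S (k.+1, b) = count (inS S) (incident k b).
Proof.
move=> le_k; apply: count_iota_list; last by move=> j lt_j; rewrite mem_ends_level.
- rewrite /incident /edges_below /edges_above; case: k le_k => [|k] le_k; case: b;
  by repeat (case: ifP => ?); rewrite /= ?inE; lia.
- exact: incident_lt.
Qed.

Lemma degree_origin (S : {set 'I_(nE G)}) :
  degree S (0, false) = inS S 0 + inS S 1.
Proof.
rewrite /degree (@count_iota_list _ _ [:: 0; 1]) /= ?addn0 ?nE_eq //.
move=> j lt_j; rewrite -nE_eq in lt_j.
case: (edge_index_cases lt_j) => [->|->|[m lt_m [r lt_r ->]]|[r lt_r ->]] //.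
- rewrite ends_transition // /transition_ends lt_m !inE.
  by case: (dr m); case: r lt_r => [|[|[|r]]] lt_r //=; rewrite ?xpair_eqE /=; lia.
- rewrite ends_transition ?(ltn_trans lt_r) // /transition_ends ltnn.
  by rewrite !inE ?xpair_eqE /=; lia.
Qed.

Lemma degree_top (S : {set 'I_(nE G)}) :
  degree S (n.+2, false) = inS S (2 + 3 * n) + inS S (3 + 3 * n).
Proof.
rewrite /degree (@count_iota_list _ _ [:: 2 + 3 * n; 3 + 3 * n]) /= ?addn0 //.
- by rewrite !inE; lia.
- by rewrite nE_eq /=; lia.
move=> j lt_j; case: (edge_index_cases lt_j) => [->|->|[m lt_m [r lt_r ->]]|[r lt_r ->]].
- by rewrite /ends /= !inE ?xpair_eqE /=; lia.
- by rewrite /ends /= !inE ?xpair_eqE /=; lia.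
- rewrite ends_transition // /transition_ends lt_m !inE.
  by case: (dr m); case: r lt_r => [|[|[|r]]] lt_r //=; rewrite !inE ?xpair_eqE /=; lia.
- rewrite ends_transition ?(ltn_trans lt_r) // /transition_ends ltnn !inE ?xpair_eqE /=.
  by case: r lt_r => [|[|r]] lt_r //=; lia.
Qed.

End Degrees.

(* A bit sequence s describes the edge set [matching_of s]: s k
   says that the edge of the matching between levels k and k+1 ends at the
   north-west vertex of level k+1.  The admissible states are exactly those
   describing perfect matchings. *)
Section States.
Variables (L : Type) (G : snake L).
Local Notation n := (size (dirs G)).
Local Notation dr k := (nth false (dirs G) k).

Definition chosen_at (s : nat -> bool) (k r : nat) : bool :=
  if k < n then
    (if dr k then
       match r with 0 => ~~ s k && ~~ s k.+1 | 1 => s k | _ => ~~ s k && s k.+1 end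
     else match r with 0 => s k && s k.+1 | 1 => ~~ s k | _ => s k && ~~ s k.+1 end)
  else (if (r == 0) == ~~ odd n then ~~ s n else s n).

Definition chosen (s : nat -> bool) (j : nat) : bool :=
  if j == 0 then ~~ s 0 else if j == 1 then s 0
  else chosen_at s ((j - 2) %/ 3) ((j - 2) %% 3).

Lemma chosen_transition s k r : r < 3 -> chosen s (2 + (3 * k + r)) = chosen_at s k r.
Proof.
move=> lt_r3; rewrite /chosen addKn.
have -> : (2 + (3 * k + r) == 0) = false by lia.
have -> : (2 + (3 * k + r) == 1) = false by lia.
by congr chosen_at; lia.
Qed.

Lemma chosen2 s k : chosen s (2 + 3 * k) = chosen_at s k 0.
Proof. by rewrite -chosen_transition // addn0. Qed.

Lemma chosen3 s k : chosen s (3 + 3 * k) = chosen_at s k 1.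
Proof. by rewrite -chosen_transition //; congr chosen; lia. Qed.

Lemma chosen4 s k : chosen s (4 + 3 * k) = chosen_at s k 2.
Proof. by rewrite -chosen_transition //; congr chosen; lia. Qed.

Lemma chosen_final s b :
  chosen s (if b == ~~ odd n then 2 + 3 * n else 3 + 3 * n) = (if b then ~~ s n else s n).
Proof.
case: ifP => Eb; rewrite ?chosen2 ?chosen3 /chosen_at ltnn /=;
by move: Eb; case: b; case: (odd n).
Qed.

(* The local condition on the bits of consecutive tiles k, k+1; it says
   that the vertices of level k+1 are matched exactly once. *)
Definition admissible (s : nat -> bool) : Prop :=
  forall k, k < n -> if dr k then ~~ (s k && s k.+1) else s k || s k.+1.

Definition matching_of (s : nat -> bool) : {set 'I_(nE G)} :=
  [set f : 'I_(nE G) | chosen s f].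

Lemma inS_matching_of s j : j < nE G -> inS (matching_of s) j = chosen s j.
Proof.
move=> lt_j; apply/existsP/idP => [[f /andP[Sf /eqP <-]]|chosen_j].
  by rewrite inE in Sf.
by exists (Ordinal lt_j); rewrite inE chosen_j eqxx.
Qed.

Lemma matching_of_ext s t : (forall k, k <= n -> s k = t k) ->
  matching_of s = matching_of t.
Proof.
move=> Est; apply/setP => f; rewrite !inE.
case: (edge_index_cases (ltn_ord f)) => [->|->|[m lt_m [r lt_r ->]]|[r lt_r ->]].
- by rewrite /chosen /= Est.
- by rewrite /chosen /= Est.
- by rewrite !chosen_transition // /chosen_at lt_m !Est //; lia.
- by rewrite !chosen_transition ?(ltn_trans lt_r) // /chosen_at ltnn !Est.
Qed.

Lemma degree_matching_of_level s k b : admissible s -> k <= n ->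
  degree (matching_of s) (k.+1, b) = 1.
Proof.
move=> adm_s le_k; rewrite degree_level // (eq_in_count (a2 := chosen s)); last first.
  by move=> j /(allP (incident_lt b le_k)) lt_j; rewrite inS_matching_of.
rewrite /incident /edges_below /edges_above !count_cat.
case: k le_k => [|k] le_k.
  case n_gt0: (0 < n); last first.
    have n0 : n = 0 by lia.
    by rewrite /= chosen_final n0; case: b; rewrite /chosen /=; lia.
  have := adm_s 0 n_gt0; case Ed: (dr 0); case: b => /=;
  by rewrite ?chosen2 ?chosen3 ?chosen4 /chosen_at n_gt0 ?Ed /chosen /=; lia.
have lt_k : k < n by lia.
have := adm_s k lt_k; case: (ltnP k.+1 n) => [lt_k1|le_nk1].
  have := adm_s k.+1 lt_k1.
  by case Ed: (dr k); case Ed1: (dr k.+1); case: b => /=;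
    rewrite ?chosen2 ?chosen3 ?chosen4 /chosen_at lt_k lt_k1 ?Ed ?Ed1 /=; lia.
have n_eq : n = k.+1 by lia.
case Ed: (dr k); case: b => /=;
by rewrite ?chosen_final ?chosen2 ?chosen3 ?chosen4 /chosen_at lt_k ?Ed /= n_eq; lia.
Qed.

Lemma matching_of_perfect s : admissible s -> is_perfect (matching_of s).
Proof.
move=> adm_s; apply/perfectP => -[l b]; rewrite /is_vertex /=.
case/or3P => [/andP[/eqP -> /negPf ->]|/andP[l_gt0 l_le]|/andP[/eqP -> /negPf ->]].
- rewrite degree_origin !inS_matching_of ?nE_eq; try lia.
  by rewrite /chosen /=; case: (s 0).
- have -> : l = l.-1.+1 by lia.
  by apply: degree_matching_of_level => //; lia.
- rewrite degree_top !inS_matching_of ?nE_eq; try lia.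
  rewrite (_ : 3 + 3 * n = 2 + (3 * n + 1)); last by lia.
  by rewrite chosen2 chosen_transition // /chosen_at ltnn /=; case: (odd n) => /=; lia.
Qed.

(* The state of an edge set: whether the north-west vertex of level k+1 is
   matched to the level below. *)
Definition state_of (S : {set 'I_(nE G)}) (k : nat) : bool :=
  if k is m.+1 then
    (if dr m then inS S (4 + 3 * m) else inS S (2 + 3 * m) || inS S (3 + 3 * m))
  else inS S 1.

Lemma edges_belowS k b : edges_below G k.+1 b =
  if dr k then (if b then [:: 4 + 3 * k] else [:: 2 + 3 * k; 3 + 3 * k])
  else (if b then [:: 2 + 3 * k; 3 + 3 * k] else [:: 4 + 3 * k]).
Proof. by []. Qed.

Lemma edges_above_lt k b : k < n -> edges_above G k b =
  if dr k then (if b then [:: 2 + 3 * k; 4 + 3 * k] else [:: 3 + 3 * k])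
  else (if b then [:: 3 + 3 * k] else [:: 2 + 3 * k; 4 + 3 * k]).
Proof. by move=> lt_k; rewrite /edges_above lt_k. Qed.

Lemma edges_above_last b :
  edges_above G n b = [:: if b == ~~ odd n then 2 + 3 * n else 3 + 3 * n].
Proof. by rewrite /edges_above ltnn. Qed.

Section PerfectState.
Variable S : {set 'I_(nE G)}.
Hypothesis perfect_S : is_perfect S.

Let deg_level k b : k <= n ->
  (count (inS S) (edges_below G k b) + count (inS S) (edges_above G k b) = 1)%N.
Proof.
move=> le_k; rewrite -count_cat -degree_level //.
by apply/(perfectP S).1 => //; rewrite /is_vertex /=; lia.
Qed.

Lemma state_of_below k : k <= n ->
  count (inS S) (edges_below G k true) = state_of S k :> nat /\
  count (inS S) (edges_below G k false) = ~~ state_of S k :> nat.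
Proof.
elim: k => [|k IHk] le_k.
  have := (perfectP S).1 perfect_S (0, false) isT.
  by rewrite degree_origin /edges_below /state_of /=; lia.
have [below_t below_f] := IHk (ltnW le_k).
have := deg_level true (ltnW le_k); have := deg_level false (ltnW le_k).
move: below_t below_f; rewrite !edges_belowS !edges_above_lt // [state_of S k.+1]/state_of.
by case: (dr k) => /=; lia.
Qed.

Lemma state_of_admissible : admissible (state_of S).
Proof.
move=> k lt_k; have [below_t below_f] := state_of_below (ltnW lt_k).
have [belowS_t belowS_f] := state_of_below lt_k.
have := deg_level true (ltnW lt_k); have := deg_level false (ltnW lt_k).
move: below_t below_f belowS_t belowS_f; rewrite !edges_belowS !edges_above_lt //.
by case: (dr k) => /=; lia.
Qed.

Lemma perfect_matching_of_state : S = matching_of (state_of S).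
Proof.
apply/setP => f; rewrite inE -inS_ord.
case: (edge_index_cases (ltn_ord f)) => [->|->|[m lt_m [r lt_r ->]]|[r lt_r ->]].
- have := (perfectP S).1 perfect_S (0, false) isT.
  by rewrite degree_origin /chosen /state_of /=; lia.
- by [].
- rewrite chosen_transition // /chosen_at lt_m.
  have [below_t below_f] := state_of_below (ltnW lt_m).
  have [belowS_t belowS_f] := state_of_below lt_m.
  have := deg_level true (ltnW lt_m); have := deg_level false (ltnW lt_m).
  move: below_t below_f belowS_t belowS_f; rewrite !edges_belowS !edges_above_lt //.
  case: r lt_r => [|[|[|r]]] lt_r //.
  + by rewrite addn0; case: (dr m) => /=; lia.
  + by rewrite (_ : 2 + (3 * m + 1) = 3 + 3 * m); [case: (dr m) => /=; lia | lia].
  + by rewrite (_ : 2 + (3 * m + 2) = 4 + 3 * m); [case: (dr m) => /=; lia | lia].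
- rewrite chosen_transition ?(ltn_trans lt_r) // /chosen_at ltnn.
  have [below_t below_f] := state_of_below (leqnn n).
  have := deg_level true (leqnn n); have := deg_level false (leqnn n).
  move: below_t below_f; rewrite !edges_above_last.
  case: r lt_r => [|[|r]] lt_r //.
  + by rewrite addn0; case: (odd n) => /=; lia.
  + by rewrite (_ : 2 + (3 * n + 1) = 3 + 3 * n); [case: (odd n) => /=; lia | lia].
Qed.

End PerfectState.

End States.

Lemma count_pred1 (p : pred nat) x s : uniq s -> x \in s ->
  count (fun j => p j && (j == x)) s = p x.
Proof.
elim: s => [|y s IHs] //= /andP[s'y uniq_s]; rewrite inE => /orP[/eqP ->|s_x].
  rewrite eqxx andbT (eq_in_count (a2 := pred0)) ?count_pred0 ?addn0 // => j s_j /=.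
  by case: (eqVneq j y) => [Ejy|]; [rewrite -Ejy s_j in s'y | rewrite andbF].
rewrite IHs //; case: eqP => [Exy|_]; last by rewrite andbF.
by rewrite Exy s_x in s'y.
Qed.

Lemma count_predU1 (p a : pred nat) x s : uniq s -> x \in s -> ~~ a x ->
  count (fun j => p j && (a j || (j == x))) s = count (fun j => p j && a j) s + p x.
Proof.
move=> uniq_s s_x a'x; rewrite -(count_pred1 p uniq_s s_x) -count_predUI.
rewrite -[LHS]addn0 -(count_pred0 s); congr (_ + _); apply: eq_count => j /=.
  by rewrite andb_orr.
by case: eqP => [->|]; rewrite ?(negPf a'x) ?andbF.
Qed.

Section Enclosed.
Variables (L : Type) (G : snake L).
Local Notation n := (size (dirs G)).
Local Notation dr k := (nth false (dirs G) k).
Local Notation c k := (corner G k).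

Definition edge_at (j : nat) : edge := (nth (ledge0 G) (ledges G) j).1.

Lemma edge_at0 : edge_at 0 = south (c 0). Proof. by []. Qed.
Lemma edge_at1 : edge_at 1 = west (c 0). Proof. by []. Qed.

Lemma edge_at_transition m r : m < n -> r < 3 -> edge_at (2 + (3 * m + r)) =
  if dr m then nth (south (0, 0)) [:: north (c m); east (c m); west (c m.+1)] r
  else nth (south (0, 0)) [:: east (c m); north (c m); south (c m.+1)] r.
Proof.
move=> lt_m lt_r; rewrite /edge_at nth_ledges_transition // /transition.
by case: (dr m); case: r lt_r => [|[|[|r]]].
Qed.

Lemma edge_at_final r : r < 2 -> edge_at (2 + (3 * n + r)) =
  if ~~ odd n then nth (south (0, 0)) [:: north (c n); east (c n)] r
  else nth (south (0, 0)) [:: east (c n); north (c n)] r.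
Proof.
move=> lt_r; rewrite /edge_at nth_ledges_final // /final_edges /ntiles /=.
by case: (odd n); case: r lt_r => [|[|r]].
Qed.

Definition crosses (k j : nat) : bool :=
  let: (x, y, h) := edge_at j in [&& ~~ h, x <= (c k).1 & y == (c k).2].

Lemma crosses0 j : j < nE G -> crosses 0 j = (j == 1).
Proof.
move=> lt_j; rewrite /crosses.
case: (edge_index_cases lt_j) => [->|->|[m lt_m [r lt_r ->]]|[r lt_r ->]].
- by [].
- by rewrite edge_at1 corner0.
- rewrite edge_at_transition //.
  have := cornerS lt_m; have := corner_mono (leq0n m) (ltnW lt_m).
  have := corner_mono (leq0n m.+1) lt_m; rewrite corner0.
  by case: (dr m) => _ _ ->; case: r lt_r => [|[|[|r]]] lt_r //=; lia.
- rewrite edge_at_final //; have := corner_mono (leq0n n) (leqnn n); rewrite corner0.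
  by case: (odd n); case: r lt_r => [|[|r]] lt_r //=; lia.
Qed.

(* Moving the ray one tile on: after a north step only the west side of the
   new tile is crossed, after an east step the shared side is added. *)
Lemma crossesS k j : k < n -> j < nE G ->
  crosses k.+1 j = if dr k then j == 4 + 3 * k else crosses k j || (j == 2 + 3 * k).
Proof.
move=> lt_k lt_j; rewrite /crosses.
have cSk := cornerS lt_k; have sum_k := corner_sum (ltnW lt_k).
case: (edge_index_cases lt_j) => [->|->|[m lt_m [r lt_r ->]]|[r lt_r ->]].
- by rewrite edge_at0; case: (dr k).
- rewrite edge_at1 corner0 cSk; move: sum_k; case: (dr k) => /=; lia.
- rewrite edge_at_transition //.
  have cSm := cornerS lt_m; have sum_m := corner_sum (ltnW lt_m).
  have M1 : m <= k -> (c m).1 <= (c k).1 /\ (c m).2 <= (c k).2.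
    by move/corner_mono; apply; apply: ltnW.
  have M2 : k <= m -> (c k).1 <= (c m).1 /\ (c k).2 <= (c m).2.
    by move/corner_mono; apply; apply: ltnW.
  have M3 : m.+1 <= k -> (c m.+1).1 <= (c k).1 /\ (c m.+1).2 <= (c k).2.
    by move/corner_mono; apply; apply: ltnW.
  have M4 : k.+1 <= m -> (c k.+1).1 <= (c m).1 /\ (c k.+1).2 <= (c m).2.
    by move/corner_mono; apply; apply: ltnW.
  move: M1 M2 M3 M4; rewrite cSm cSk; move: sum_m sum_k.
  have [->|neq_mk] := eqVneq m k.
    by case: (dr k); case: r lt_r => [|[|[|r]]] lt_r //=; lia.
  by case: (dr m); case: (dr k); case: r lt_r => [|[|[|r]]] lt_r //=; lia.
- rewrite edge_at_final //.
  have sum_n := corner_sum (leqnn n).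
  have M2 : k <= n -> (c k).1 <= (c n).1 /\ (c k).2 <= (c n).2.
    by move/corner_mono; apply.
  have M4 : k.+1 <= n -> (c k.+1).1 <= (c n).1 /\ (c k.+1).2 <= (c n).2.
    by move/corner_mono; apply.
  move: M2 M4; rewrite cSk; move: sum_n sum_k.
  by case: (odd n); case: (dr k); case: r lt_r => [|[|r]] lt_r //=; lia.
Qed.

Lemma crosses_shared k : k < n -> dr k = false -> crosses k (2 + 3 * k) = false.
Proof.
move=> lt_k Ed; rewrite /crosses -[2 + 3 * k]addn0 -addnA edge_at_transition // Ed /=.
lia.
Qed.

Lemma inS_symdiff (S T : {set 'I_(nE G)}) j : j < nE G ->
  inS (symdiff S T) j = (inS S j != inS T j).
Proof.
move=> lt_j; have -> : j = Ordinal lt_j by [].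
by rewrite !inS_ord /symdiff !inE; case: (_ \in S); case: (_ \in T).
Qed.

Lemma odd_crossings s k : admissible G s -> k <= n ->
  odd (count (fun j => inS (symdiff (matching_of G s) (matching_of G odd)) j
                       && crosses k j) (iota 0 (nE G))) = s k (+) odd k.
Proof.
move=> adm_s; set D := symdiff _ _.
have inD j : j < nE G -> inS D j = (chosen G s j != chosen G odd j).
  by move=> lt_j; rewrite inS_symdiff // !inS_matching_of.
have iota_j j : j < nE G -> j \in iota 0 (nE G) by rewrite mem_iota.
elim: k => [|k IHk] le_k.
  rewrite (eq_in_count (a2 := fun j => inS D j && (j == 1))); last first.
    by move=> j; rewrite mem_iota add0n => /andP[_ lt_j]; rewrite crosses0.
  rewrite count_pred1 ?iota_uniq ?iota_j ?inD ?nE_eq //; try lia.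
  by rewrite /chosen /=; case: (s 0).
have lt_k : k < n by lia.
rewrite (eq_in_count (a2 := fun j => inS D j &&
   (if dr k then j == 4 + 3 * k else crosses k j || (j == 2 + 3 * k)))); last first.
  by move=> j; rewrite mem_iota add0n => /andP[_ lt_j]; rewrite crossesS.
have := adm_s k lt_k; case Ed: (dr k) => adm_k.
  rewrite count_pred1 ?iota_uniq ?iota_j ?inD ?nE_eq; try lia.
  rewrite !chosen4 /chosen_at lt_k Ed /=.
  by move: adm_k; case: (s k); case: (s k.+1); case: (odd k).
rewrite count_predU1 ?iota_uniq ?iota_j ?crosses_shared ?nE_eq //; try lia.
rewrite oddD -nE_eq IHk ?(ltnW le_k) // inD ?nE_eq; last lia.
rewrite !chosen2 /chosen_at lt_k Ed /=.
by move: adm_k; case: (s k); case: (s k.+1); case: (odd k).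
Qed.

Lemma encloses_matching_of s (k : 'I_(ntiles G)) : admissible G s ->
  encloses (symdiff (matching_of G s) (matching_of G odd)) k = s k (+) odd k.
Proof.
move=> adm_s; rewrite /encloses -(odd_crossings adm_s (ltn_ord k)) -card_ord_count.
by congr (odd _); apply: eq_card => f; rewrite !inE inS_ord !inE.
Qed.

Lemma shared_not_boundary k : k < n -> is_boundary G (edge_at (2 + 3 * k)) = false.
Proof.
move=> lt_k; rewrite /is_boundary /ntiles.
have -> : n.+1 = k + (2 + (n - k - 1)) by lia.
rewrite iotaD iotaD !count_cat add0n /=.
have side_k : edge_at (2 + 3 * k) \in tile_sides G k.
  rewrite -[2 + 3 * k]addn0 -addnA edge_at_transition //.
  by case: (dr k); rewrite /tile_sides !inE eqxx ?orbT.
have side_k1 : edge_at (2 + 3 * k) \in tile_sides G k.+1.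
  rewrite -[2 + 3 * k]addn0 -addnA edge_at_transition // /tile_sides cornerS //.
  by case: (dr k); rewrite /tile_sides !inE /= /north /east /south /west !xpair_eqE /=; lia.
by rewrite side_k side_k1; apply/negbTE; lia.
Qed.

Lemma edge_at_south0 j : j < nE G -> edge_at j = south (c 0) -> j = 0.
Proof.
move=> lt_j; case: (edge_index_cases lt_j) => [->|->|[m lt_m [r lt_r ->]]|[r lt_r ->]] //.
- rewrite edge_at_transition // corner0.
  have := corner_sum (ltnW lt_m); have := cornerS lt_m.
  by case: (dr m) => ->; case: r lt_r => [|[|[|r]]] lt_r //=;
    rewrite /north /east /west /south => ? [] /=; lia.
- rewrite edge_at_final // corner0.
  by case: (odd n); case: r lt_r => [|[|r]] lt_r //=; rewrite /north /east => -[].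
Qed.

Lemma minimal_matching_odd Pm : is_minimal_matching Pm -> Pm = matching_of G odd.
Proof.
case/and3P => perf_Pm /forall_inP bnd_Pm /exists_inP [e0 Pm_e0 /eqP south_e0].
have EPm := perfect_matching_of_state perf_Pm; set s := state_of Pm in EPm.
have adm_s : admissible G s := state_of_admissible perf_Pm.
have no_shared k : k < n -> chosen G s (2 + 3 * k) = false.
  move=> lt_k; apply/negP => chosen_k.
  have lt_j : 2 + 3 * k < nE G by rewrite nE_eq; lia.
  have := bnd_Pm (Ordinal lt_j); rewrite EPm inE chosen_k => /(_ isT).
  by rewrite (shared_not_boundary lt_k).
have s0 : s 0 = false.
  have e0_0 := edge_at_south0 (ltn_ord e0) south_e0.
  by move: Pm_e0; rewrite EPm inE /chosen e0_0 /= => /negbTE.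
rewrite EPm; apply: matching_of_ext; elim=> [|k IHk] le_k //.
have lt_k : k < n by lia.
rewrite [odd k.+1]/= -IHk ?(ltnW le_k) //.
move: (no_shared k lt_k) (adm_s k lt_k); rewrite chosen2 /chosen_at lt_k.
by case: (dr k); case: (s k); case: (s k.+1).
Qed.

End Enclosed.

Fixpoint bitseqs (m : nat) : seq (seq bool) :=
  if m is m'.+1 then [seq rcons t b | t <- bitseqs m', b <- [:: false; true]]
  else [:: [::]].

Lemma bitseqsS m :
  bitseqs m.+1 = [seq rcons t b | t <- bitseqs m, b <- [:: false; true]].
Proof. by []. Qed.

Lemma mem_bitseqs m t : (t \in bitseqs m) = (size t == m).
Proof.
elim: m t => [|m IHm] t; first by rewrite inE; case: t.
apply/allpairsP/eqP => [[[u b] [/= bits_u _ ->]]|].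
  by rewrite size_rcons; rewrite IHm in bits_u; rewrite (eqP bits_u).
case/lastP: t => [|u b] //; rewrite size_rcons => -[size_u].
by exists (u, b) => /=; rewrite IHm size_u; case: b.
Qed.

Lemma uniq_bitseqs m : uniq (bitseqs m).
Proof.
elim: m => [|m IHm] //; rewrite bitseqsS allpairs_uniq // => -[u b] [u' b'] _ _ /=.
by move/rcons_inj => [-> ->].
Qed.

Local Open Scope ring_scope.

Section Transfer.
Variable R : comNzRingType.

Definition ord_of_bit (b : bool) : 'I_2 := if b then ord_max else ord0.

Definition entry (A : 'M[R]_2) (b c : bool) : R := A (ord_of_bit b) (ord_of_bit c).

Lemma entry_mul (A B : 'M[R]_2) i j :
  entry (A *m B) i j = entry A i false * entry B false j + entry A i true * entry B true j.
Proof.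
rewrite /entry mxE !big_ord_recl big_ord0 addr0 /=; congr (_ + _ * _).
- by congr (A _); apply: val_inj.
- by congr (B _); apply: val_inj.
Qed.

Definition mprod (m : nat -> 'M[R]_2) (N : nat) : 'M[R]_2 :=
  foldl (fun acc k => m k *m acc) 1%:M (iota 0 N).

Lemma mprodS m N : mprod m N.+1 = m N *m mprod m N.
Proof. by rewrite /mprod -(addn1 N) iotaD foldl_cat. Qed.

Definition tbit (tw : nat -> bool) (t : seq bool) (k : nat) : bool :=
  nth false t k (+) tw k.

Definition path_weight (m : nat -> 'M[R]_2) (A : 'M[R]_2) (tw : nat -> bool)
    (j : bool) (N : nat) (t : seq bool) : R :=
  (\prod_(k < N) entry (m k) (tbit tw t k.+1) (tbit tw t k)) * entry A (tbit tw t 0) j.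

Lemma transfer_expansion (m : nat -> 'M[R]_2) (A : 'M[R]_2) (tw : nat -> bool) N i j :
  entry (mprod m N *m A) i j =
  \sum_(t <- bitseqs N.+1) (if tbit tw t N == i then path_weight m A tw j N t else 0).
Proof.
elim: N i => [|N IHN] i.
  rewrite /mprod /= mul1mx !big_cons big_nil /= /path_weight /tbit /= !big_ord0 !mul1r.
  by case: i; case: (tw 0); rewrite /= ?addr0 ?add0r.
rewrite bitseqsS big_allpairs_dep mprodS -mulmxA entry_mul !IHN !big_distrr -big_split.
rewrite big_seq [RHS]big_seq; apply: eq_bigr => t; rewrite mem_bitseqs => /eqP size_t.
rewrite !big_cons big_nil /= addr0.
have tbit_old (b : bool) k : (k <= N)%N -> tbit tw (rcons t b) k = tbit tw t k.
  by move=> le_k; rewrite /tbit nth_rcons size_t ltnS le_k.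
have tbit_new (b : bool) : tbit tw (rcons t b) N.+1 = b (+) tw N.+1.
  by rewrite /tbit nth_rcons size_t ltnn eqxx.
have weight_rcons (b : bool) : path_weight m A tw j N.+1 (rcons t b) =
    entry (m N) (b (+) tw N.+1) (tbit tw t N) * path_weight m A tw j N t.
  rewrite /path_weight big_ord_recr /= tbit_new !tbit_old //.
  rewrite (eq_bigr (fun k : 'I_N => entry (m k) (tbit tw t k.+1) (tbit tw t k))).
    by ring.
  by move=> k _; rewrite !tbit_old // ltnW.
rewrite !tbit_new !weight_rcons.
by case: (tbit tw t N); case: i; case: (tw N.+1); rewrite /= ?mulr0 ?add0r ?addr0.
Qed.

End Transfer.

Section ProductSplit.
Variable R : comNzRingType.

Lemma prod_triples (f : nat -> R) a m :
  \prod_(a <= j < a + 3 * m) f j =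
  \prod_(k < m) (f (a + 3 * k)%N * f (a + 3 * k).+1 * f (a + 3 * k).+2).
Proof.
elim: m => [|m IHm]; first by rewrite muln0 addn0 big_geq // big_ord0.
rewrite (big_cat_nat (n := (a + 3 * m)%N)) ?IHm ?big_ord_recr /=; try lia.
congr (_ * _); rewrite big_ltn; last lia.
rewrite big_ltn; last lia.
rewrite big_ltn; last lia.
by rewrite big_geq /= ?mulr1 ?mulrA //; lia.
Qed.

Lemma prod_pair (f : nat -> R) a : \prod_(a <= i < a.+2) f i = f a * f a.+1.
Proof. by rewrite big_ltn // big_ltn // big_geq // /= mulr1. Qed.

Lemma prod_edge_indices (f : nat -> R) m :
  \prod_(0 <= j < 3 * m + 4) f j =
  f 0%N * f 1%N * \prod_(k < m) (f (2 + 3 * k)%N * f (3 + 3 * k)%N * f (4 + 3 * k)%N) *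
  (f (2 + 3 * m)%N * f (3 + 3 * m)%N).
Proof.
rewrite (big_cat_nat (n := 2%N)); try lia.
rewrite (big_cat_nat (n := (2 + 3 * m)%N) (m := 2%N)); try lia.
rewrite prod_triples prod_pair (_ : (3 * m + 4 = (2 + 3 * m).+2)%N); last lia.
by rewrite prod_pair /= mulrA.
Qed.

End ProductSplit.

Definition opt (R : comNzRingType) (b : bool) (x : R) : R := if b then x else 1.

(* Each X k is contributed exactly once, either by its own "lower" factor
   or by a neighbour's "upper" factor. *)
Lemma telescope (R : comNzRingType) (s : nat -> bool) (X : nat -> R) m :
  opt (s 0%N) (X 0%N) * \prod_(k < m) (opt (~~ s k) (X k) * opt (s k.+1) (X k.+1)) *
  opt (~~ s m) (X m) = \prod_(k < m.+1) X k.
Proof.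
have split_X : \prod_(k < m.+1) X k =
    \prod_(k < m.+1) opt (s k) (X k) * \prod_(k < m.+1) opt (~~ s k) (X k).
  rewrite -big_split /=; apply: eq_bigr => k _.
  by rewrite /opt; case: (s k); rewrite ?mulr1 ?mul1r.
by rewrite split_X big_ord_recl big_ord_recr big_split /=; ring.
Qed.

Section Weights.
Variables (L : Type) (G : snake L) (F : fieldType) (xv yv : L -> F).
Local Notation n := (size (dirs G)).
Local Notation dr k := (nth false (dirs G) k).

Definition label_at (j : nat) : L := (nth (ledge0 G) (ledges G) j).2.

Lemma label_shared k : (k < n)%N -> label_at (2 + 3 * k) = lA G k.
Proof.
move=> lt_k; rewrite /label_at -[(2 + 3 * k)%N]addn0 -addnA nth_ledges_transition //.
by rewrite /transition; case: (dr k).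
Qed.

Lemma label_free_lower k : (k < n)%N -> label_at (3 + 3 * k) = li G k.+1.
Proof.
move=> lt_k; rewrite /label_at (_ : (3 + 3 * k = 2 + (3 * k + 1))%N); last by lia.
by rewrite nth_ledges_transition // /transition; case: (dr k).
Qed.

Lemma label_free_upper k : (k < n)%N -> label_at (4 + 3 * k) = li G k.
Proof.
move=> lt_k; rewrite /label_at (_ : (4 + 3 * k = 2 + (3 * k + 2))%N); last by lia.
by rewrite nth_ledges_transition // /transition; case: (dr k).
Qed.

Lemma label_w : label_at (2 + 3 * n) = lw G.
Proof.
rewrite /label_at -[(2 + 3 * n)%N]addn0 -addnA nth_ledges_final //.
by rewrite /final_edges; case: ifP.
Qed.

Lemma label_z : label_at (3 + 3 * n) = lz G.
Proof.
rewrite /label_at (_ : (3 + 3 * n = 2 + (3 * n + 1))%N); last by lia.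
by rewrite nth_ledges_final // /final_edges; case: ifP.
Qed.

Lemma weight_matching_of s :
  weight xv (matching_of G s) =
  opt (~~ s 0%N) (xv (la G)) * opt (s 0%N) (xv (lb G)) *
  \prod_(k < n) (opt (chosen_at G s k 0) (xv (lA G k)) *
                 opt (chosen_at G s k 1) (xv (li G k.+1)) *
                 opt (chosen_at G s k 2) (xv (li G k))) *
  (opt (chosen_at G s n 0) (xv (lw G)) * opt (chosen_at G s n 1) (xv (lz G))).
Proof.
rewrite /weight big_mkcond /=.
rewrite (eq_bigr (fun e : 'I_(nE G) => opt (chosen G s e) (xv (label_at e)))); last first.
  by move=> e _; rewrite inE.
rewrite -(big_mkord xpredT (fun j => opt (chosen G s j) (xv (label_at j)))).
rewrite nE_eq prod_edge_indices chosen2 chosen3 label_w label_z.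
congr (_ * _ * _); apply: eq_bigr => k _.
by rewrite chosen2 chosen3 chosen4 label_shared ?label_free_lower ?label_free_upper.
Qed.

Lemma height_matching_of s : admissible G s ->
  height yv (matching_of G odd) (matching_of G s) =
  \prod_(k < n.+1) opt (s k (+) odd k) (yv (li G k)).
Proof.
move=> adm_s; rewrite /height big_mkcond /=; apply: eq_bigr => k _.
by rewrite encloses_matching_of.
Qed.

Hypothesis xv_neq0 : forall l : L, xv l != 0.

(* The factors of transition k, together with y_{i_k} if tile k is enclosed,
   form the entry of m_k selected by the twisted states of tiles k and k+1,
   up to the telescoping factors x_{i_k}, x_{i_{k+1}}. *)
Lemma transition_factor s k : (k < n)%N ->
  (if dr k then ~~ (s k && s k.+1) else s k || s k.+1) ->
  opt (chosen_at G s k 0) (xv (lA G k)) * opt (chosen_at G s k 1) (xv (li G k.+1)) *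
  opt (chosen_at G s k 2) (xv (li G k)) * opt (s k (+) odd k) (yv (li G k)) =
  entry (mj G xv yv k) (s k.+1 (+) odd k.+1) (s k (+) odd k) *
  (opt (~~ (s k (+) odd k)) (xv (li G k)) * opt (s k.+1 (+) odd k.+1) (xv (li G k.+1))).
Proof.
move=> lt_k adm_k; have x_k := xv_neq0 (li G k); have x_k1 := xv_neq0 (li G k.+1).
rewrite /chosen_at lt_k /mj /entry /mx2 /=.
by case: (dr k) adm_k; case: (s k); case: (s k.+1); case: (odd k) => //= _;
  rewrite !mxE /= /opt; try field; rewrite ?x_k ?x_k1.
Qed.

Lemma right_factor (b : bool) :
  opt (~~ b) (xv (la G)) * opt b (xv (lb G)) =
  entry (right_mx G xv) (b (+) odd 0) true * opt (b (+) odd 0) (xv (li G 0)).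
Proof.
have x_0 := xv_neq0 (li G 0).
by case: b; rewrite /entry /right_mx /mx2 !mxE /= /opt; try field; rewrite ?mulr1 ?mul1r.
Qed.

Lemma left_factor s :
  opt (chosen_at G s n 0) (xv (lw G)) * opt (chosen_at G s n 1) (xv (lz G)) *
  opt (s n (+) odd n) (yv (li G n)) =
  entry (left_mx G xv yv) false (s n (+) odd n) * opt (~~ (s n (+) odd n)) (xv (li G n)).
Proof.
have x_n := xv_neq0 (li G n).
rewrite /chosen_at ltnn /entry /left_mx /mx2 !mxE /= /opt.
by case: (s n); case: (odd n) => /=; try field; rewrite ?mulr1 ?mul1r.
Qed.

Definition path_term (t : seq bool) : F :=
  entry (left_mx G xv yv) false (tbit odd t n) *
  path_weight (mj G xv yv) (right_mx G xv) odd true n t.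

Lemma weight_height_matching_of t : admissible G (nth false t) ->
  weight xv (matching_of G (nth false t)) *
    height yv (matching_of G odd) (matching_of G (nth false t)) =
  (\prod_(k < ntiles G) xv (li G k)) * path_term t.
Proof.
move=> adm_t; set s := nth false t.
rewrite weight_matching_of height_matching_of // big_ord_recr /=.
have middle :
    \prod_(k < n) (opt (chosen_at G s k 0) (xv (lA G k)) *
                   opt (chosen_at G s k 1) (xv (li G k.+1)) *
                   opt (chosen_at G s k 2) (xv (li G k))) *
    \prod_(k < n) opt (s k (+) odd k) (yv (li G k)) =
    \prod_(k < n) entry (mj G xv yv k) (s k.+1 (+) odd k.+1) (s k (+) odd k) *
    \prod_(k < n) (opt (~~ (s k (+) odd k)) (xv (li G k)) *
                   opt (s k.+1 (+) odd k.+1) (xv (li G k.+1))).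
  by rewrite -!big_split /=; apply: eq_bigr => k _; rewrite transition_factor ?adm_t.
rewrite /ntiles -(telescope (fun k => s k (+) odd k) (fun k => xv (li G k)) n).
rewrite /path_term /path_weight /tbit -/s.
transitivity ((opt (~~ s 0%N) (xv (la G)) * opt (s 0%N) (xv (lb G))) *
  (\prod_(k < n) (opt (chosen_at G s k 0) (xv (lA G k)) *
                  opt (chosen_at G s k 1) (xv (li G k.+1)) *
                  opt (chosen_at G s k 2) (xv (li G k))) *
   \prod_(k < n) opt (s k (+) odd k) (yv (li G k))) *
  (opt (chosen_at G s n 0) (xv (lw G)) * opt (chosen_at G s n 1) (xv (lz G)) *
   opt (s n (+) odd n) (yv (li G n)))); first by ring.
by rewrite right_factor middle left_factor; ring.
Qed.

End Weights.

Section Reindexing.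
Variables (L : Type) (G : snake L).
Local Notation n := (size (dirs G)).
Local Notation dr k := (nth false (dirs G) k).

Definition admissibleb (t : seq bool) : bool :=
  all (fun k => if dr k then ~~ (nth false t k && nth false t k.+1)
                else nth false t k || nth false t k.+1) (iota 0 n).

Lemma admissibleP t : reflect (admissible G (nth false t)) (admissibleb t).
Proof.
apply: (iffP allP) => [adm_t k lt_k|adm_t k]; first by apply: adm_t; rewrite mem_iota.
by rewrite mem_iota => /andP[_ lt_k]; apply: adm_t.
Qed.

Lemma matching_of_inj s s' : admissible G s -> admissible G s' ->
  matching_of G s = matching_of G s' -> forall k, (k <= n)%N -> s k = s' k.
Proof.
move=> adm_s adm_s' Ess' k le_k.
have := odd_crossings adm_s le_k; rewrite Ess' odd_crossings //.
by case: (s k); case: (s' k); case: (odd k).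
Qed.

Lemma states_of_perfect (S : {set 'I_(nE G)}) t : is_perfect S -> size t = n.+1 ->
  (admissibleb t && (S == matching_of G (nth false t))) = (t == mkseq (state_of S) n.+1).
Proof.
move=> perf_S size_t; have adm_S := state_of_admissible perf_S.
have ES := perfect_matching_of_state perf_S.
apply/andP/eqP => [[/admissibleP adm_t /eqP ESt]|->].
  apply: (eq_from_nth (x0 := false)) => [|k]; first by rewrite size_mkseq.
  rewrite size_t => le_k; rewrite nth_mkseq //.
  by apply: (matching_of_inj adm_t adm_S) => //; rewrite -ESt -ES.
split.
  apply/admissibleP => k lt_k.
  by rewrite !nth_mkseq ?ltnS ?(ltnW lt_k) //; apply: adm_S.
by apply/eqP; rewrite {1}ES; apply: matching_of_ext => k le_k; rewrite nth_mkseq.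
Qed.

Lemma count_states (S : {set 'I_(nE G)}) :
  count (fun t => admissibleb t && (S == matching_of G (nth false t))) (bitseqs n.+1)
  = is_perfect S.
Proof.
have [perf_S|imperf_S] := boolP (is_perfect S).
  rewrite (eq_in_count (a2 := pred1 (mkseq (state_of S) n.+1))) => [|t].
    by rewrite (count_uniq_mem _ (uniq_bitseqs _)) mem_bitseqs size_mkseq eqxx.
  by rewrite mem_bitseqs => /eqP size_t; apply: states_of_perfect.
apply/eqP; rewrite eqn0Ngt -has_count; apply/hasPn => t _.
apply/negP => /andP[/admissibleP adm_t /eqP ES].
by move: imperf_S; rewrite ES matching_of_perfect.
Qed.

Lemma sum_perfect_matchings (R : nmodType) (w : {set 'I_(nE G)} -> R) :
  \sum_(S | is_perfect S) w S =
  \sum_(t <- bitseqs n.+1 | admissibleb t) w (matching_of G (nth false t)).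
Proof.
symmetry; rewrite big_mkcond.
rewrite (eq_bigr (fun t => \sum_S
  (if admissibleb t && (S == matching_of G (nth false t)) then w S else 0))); last first.
  move=> t _; case: (admissibleb t); last by rewrite big1.
  by rewrite -big_mkcond big_pred1_eq.
rewrite exchange_big [RHS]big_mkcond; apply: eq_bigr => S _.
rewrite -big_mkcond big_const_seq iter_addr_0 count_states.
by case: (is_perfect S).
Qed.

End Reindexing.

Section Expansion.
Variables (L : Type) (G : snake L) (F : fieldType) (xv yv : L -> F).
Local Notation n := (size (dirs G)).
Local Notation dr k := (nth false (dirs G) k).

Lemma UR_expansion : UR (left_mx G xv yv *m Mmat G xv yv *m right_mx G xv) =
  \sum_(t <- bitseqs n.+1) path_term G xv yv t.
Proof.
rewrite /UR -mulmxA.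
change (entry (left_mx G xv yv *m (mprod (mj G xv yv) n *m right_mx G xv)) false true =
  \sum_(t <- bitseqs n.+1) path_term G xv yv t).
rewrite entry_mul !(transfer_expansion _ _ odd) !big_distrr -big_split.
apply: eq_bigr => t _; rewrite /path_term.
by case: (tbit odd t n); rewrite /= ?mulr0 ?addr0 ?add0r.
Qed.

(* A non-admissible sequence passes through a zero entry of some m_k. *)
Lemma path_term_inadmissible t : ~~ admissibleb G t -> path_term G xv yv t = 0.
Proof.
case/allPn => k; rewrite mem_iota add0n => /andP[_ lt_k] inadm_k.
rewrite /path_term /path_weight (bigD1 (Ordinal lt_k)) //=.
suff -> : entry (mj G xv yv k) (tbit odd t k.+1) (tbit odd t k) = 0.
  by rewrite !mul0r mulr0.
move: inadm_k; rewrite /mj /entry /mx2 /tbit /=.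
by case: (dr k); case: (nth false t k); case: (nth false t k.+1); case: (odd k) => //= _;
  rewrite !mxE.
Qed.

End Expansion.

Theorem mainTheorem4 (F : fieldType) (L : Type) (G : snake L) (xv yv : L -> F)
    (Pm : {set 'I_(nE G)}) :
  (forall l : L, xv l != 0) ->
  is_minimal_matching Pm ->
  \sum_(S : {set 'I_(nE G)} | is_perfect S) weight xv S * height yv Pm S =
  (\prod_(k < ntiles G) xv (li G k)) *
    UR (left_mx G xv yv *m Mmat G xv yv *m right_mx G xv).
Proof.
move=> xv_neq0 min_Pm; rewrite (minimal_matching_odd min_Pm) sum_perfect_matchings.
rewrite UR_expansion big_distrr [RHS](bigID (admissibleb G)) /=.
rewrite [X in _ + X]big1 ?addr0 => [|t /path_term_inadmissible ->]; last by rewrite mulr0.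
rewrite big_seq_cond [RHS]big_seq_cond; apply: eq_bigr => t /andP[_ /admissibleP adm_t].
by rewrite weight_height_matching_of.
Qed.
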